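(* $\widetilde{S}_{AB}$ is a down-complete Inf semi-lattice, and for every family $\{U_i\;\vert\; i\in I\}$ of subsets of $\mathfrak{S}_A\times\mathfrak{S}_B$, $$\inf^{\widetilde{S}_{AB}}_{i\in I}\Omega(U_i)=\Omega\Big(\bigcup_{i\in I}U_i\Big).$$
   Context: $\mathfrak{B}=\{\mathbf{Y},\mathbf{N},\bot\}$ with meet $\wedge$ and commutative product $\bullet$ ($x\bullet\mathbf{Y}=x$, $x\bullet\mathbf{N}=\mathbf{N}$, $\bot\bullet\bot=\bot$). $(\mathfrak{S}_A,\mathfrak{E}_A,\epsilon^{\mathfrak{S}_A})$, $(\mathfrak{S}_B,\mathfrak{E}_B,\epsilon^{\mathfrak{S}_B})$ are States/Effects Chu spaces (down-complete Inf semi-lattices of states and of effects, evaluation maps $\epsilon$ preserving arbitrary infima in each variable). For $U\subseteq\mathfrak{S}_A\times\mathfrak{S}_B$, $\Omega(U)$ is the map $\mathfrak{E}_A\times\mathfrak{E}_B\to\mathfrak{B}$, $(\mathfrak{l}_A,\mathfrak{l}_B)\mapsto\bigwedge_{(\sigma_A,\sigma_B)\in U}\epsilon^{\mathfrak{S}_A}_{\mathfrak{l}_A}(\sigma_A)\bullet\epsilon^{\mathfrak{S}_B}_{\mathfrak{l}_B}(\sigma_B)$ (subsets giving the same map are identified). The minimal tensor product $\widetilde{S}_{AB}$ is the set of all such maps $\Omega(U)$, ordered pointwise (it is the sub Inf semi-lattice of the maximal tensor product generated by the pure tensors). *)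

From Stdlib Require Import ClassicalDescription.

Inductive B3 : Type := BY | BN | Bbot.

Definition B3le (x y : B3) : Prop := x = Bbot \/ x = y.

Definition B3meet (x y : B3) : B3 :=
  match x, y with
  | BY, BY => BY
  | BN, BN => BN
  | _, _ => Bbot
  end.

Definition B3prod (x y : B3) : B3 :=
  match x, y with
  | BN, _ | _, BN => BN
  | BY, z => z
  | z, BY => z
  | Bbot, Bbot => Bbot
  end.

Definition B3inf (P : B3 -> Prop) : B3 :=
  if excluded_middle_informative (forall x, P x -> x = BY) then BY
  else if excluded_middle_informative (forall x, P x -> x = BN) then BN
  else Bbot.

Definition is_lb {T : Type} (le : T -> T -> Prop) (P : T -> Prop) (x : T) : Prop :=
  forall y, P y -> le x y.

Definition is_inf {T : Type} (le : T -> T -> Prop) (P : T -> Prop) (x : T) : Prop :=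
  is_lb le P x /\ forall z, is_lb le P z -> le z x.

Definition is_inf_in {T : Type} (D : T -> Prop) (le : T -> T -> Prop)
  (P : T -> Prop) (x : T) : Prop :=
  D x /\ is_lb le P x /\ forall z, D z -> is_lb le P z -> le z x.

Definition partial_order {T : Type} (le : T -> T -> Prop) : Prop :=
  (forall x, le x x) /\
  (forall x y, le x y -> le y x -> x = y) /\
  (forall x y z, le x y -> le y z -> le x z).

Definition down_complete_inf_semilattice {T : Type} (le : T -> T -> Prop) : Prop :=
  partial_order le /\
  forall P : T -> Prop, (exists x, P x) -> exists x, is_inf le P x.

Definition image {X Y : Type} (f : X -> Y) (P : X -> Prop) : Y -> Prop :=
  fun y => exists x, P x /\ y = f x.

Definition preserves_infs {X Y : Type} (leX : X -> X -> Prop) (leY : Y -> Y -> Prop)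
  (f : X -> Y) : Prop :=
  forall P x, (exists y, P y) -> is_inf leX P x -> is_inf leY (image f P) (f x).

Record SEChu : Type := {
  st : Type;
  ef : Type;
  le_st : st -> st -> Prop;
  le_ef : ef -> ef -> Prop;
  eps : ef -> st -> B3;
  st_dcis : down_complete_inf_semilattice le_st;
  ef_dcis : down_complete_inf_semilattice le_ef;
  eps_st : forall l, preserves_infs le_st B3le (eps l);
  eps_ef : forall s, preserves_infs le_ef B3le (fun l => eps l s)
}.

Definition Omega (A B : SEChu) (U : st A * st B -> Prop) : ef A * ef B -> B3 :=
  fun l => B3inf (fun b => exists s, U s /\
                   b = B3prod (eps A (fst l) (fst s)) (eps B (snd l) (snd s))).

(* Elements of the minimal tensor product (U nonempty so that the meet exists). *)
Definition minTensor (A B : SEChu) (f : ef A * ef B -> B3) : Prop :=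
  exists U : st A * st B -> Prop, (exists s, U s) /\ f = Omega A B U.

Definition fle {A B : SEChu} (f g : ef A * ef B -> B3) : Prop :=
  forall l, B3le (f l) (g l).

(** In [B3] the infimum [B3inf] of a nonempty set is its greatest
    lower bound, so [Omega U] is, pointwise, the greatest lower bound of the
    values [eps l_A s_A . eps l_B s_B] for [s] in [U].  A pointwise lower bound
    of all [Omega (U i)] is therefore below every such value with [s] in some
    [U i], i.e. below [Omega] of the union; and [Omega] is antitone in [U].
    Hence [Omega] of the union is the infimum of the [Omega (U i)], which also
    shows that every nonempty subset of the minimal tensor product has an
    infimum there (index it by the sets [U] it comes from). *)

From Stdlib Require Import FunctionalExtensionality ClassicalDescription.

Lemma B3le_refl (x : B3) : B3le x x.
Proof. now right. Qed.

Lemma B3le_antisym (x y : B3) : B3le x y -> B3le y x -> x = y.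
Proof. intros [hx | hx] [hy | hy]; congruence. Qed.

Lemma B3le_trans (x y z : B3) : B3le x y -> B3le y z -> B3le x z.
Proof. intros [-> | ->] hyz; [now left | exact hyz]. Qed.

Lemma B3inf_lb (P : B3 -> Prop) (y : B3) : P y -> B3le (B3inf P) y.
Proof.
  intro hy; unfold B3inf.
  destruct (excluded_middle_informative _) as [allY | _].
  { right; symmetry; exact (allY y hy). }
  destruct (excluded_middle_informative _) as [allN | _].
  { right; symmetry; exact (allN y hy). }
  now left.
Qed.

Lemma B3inf_glb (P : B3 -> Prop) (z : B3) :
  (exists x, P x) -> is_lb B3le P z -> B3le z (B3inf P).
Proof.
  intros [x0 hx0] hz; unfold B3inf.
  assert (above_z : forall y, P y -> z = Bbot \/ y = z)
    by (intros y hy; destruct (hz y hy) as [e | e]; [left | right]; congruence).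
  destruct z; [| | now left]; right.
  - destruct (excluded_middle_informative _) as [_ | notY]; [reflexivity |].
    exfalso; apply notY; intros y hy.
    destruct (above_z y hy); [discriminate | assumption].
  - destruct (excluded_middle_informative _) as [allY | _].
    { pose proof (allY x0 hx0); destruct (above_z x0 hx0); congruence. }
    destruct (excluded_middle_informative _) as [_ | notN]; [reflexivity |].
    exfalso; apply notN; intros y hy.
    destruct (above_z y hy); [discriminate | assumption].
Qed.

Section PointwiseOrder.

Variables A B : SEChu.

Lemma fle_refl (f : ef A * ef B -> B3) : fle f f.
Proof. intro l; apply B3le_refl. Qed.

Lemma fle_antisym (f g : ef A * ef B -> B3) : fle f g -> fle g f -> f = g.
Proof.
  intros hfg hgf; apply functional_extensionality; intro l.
  exact (B3le_antisym _ _ (hfg l) (hgf l)).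
Qed.

Lemma fle_trans (f g h : ef A * ef B -> B3) : fle f g -> fle g h -> fle f h.
Proof. intros hfg hgh l; exact (B3le_trans _ _ _ (hfg l) (hgh l)). Qed.

End PointwiseOrder.

Section Omega.

Variables A B : SEChu.

Definition tensor_eval (l : ef A * ef B) (s : st A * st B) : B3 :=
  B3prod (eps A (fst l) (fst s)) (eps B (snd l) (snd s)).

Lemma Omega_lb (U : st A * st B -> Prop) (l : ef A * ef B) (s : st A * st B) :
  U s -> B3le (Omega A B U l) (tensor_eval l s).
Proof. intro hs; apply B3inf_lb; now exists s. Qed.

Lemma Omega_glb (U : st A * st B -> Prop) (l : ef A * ef B) (z : B3) :
  (exists s, U s) -> (forall s, U s -> B3le z (tensor_eval l s)) ->
  B3le z (Omega A B U l).
Proof.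
  intros [s0 hs0] hz; apply B3inf_glb.
  - now exists (tensor_eval l s0), s0.
  - intros b [s [hs ->]]; exact (hz s hs).
Qed.

Lemma Omega_antitone (U V : st A * st B -> Prop) :
  (exists s, U s) -> (forall s, U s -> V s) -> fle (Omega A B V) (Omega A B U).
Proof.
  intros hU hUV l; apply Omega_glb; [exact hU |].
  intros s hs; exact (Omega_lb V l s (hUV s hs)).
Qed.

Lemma Omega_union_is_inf (I : Type) (U : I -> st A * st B -> Prop) :
  (exists i : I, True) -> (forall i, exists s, U i s) ->
  is_inf_in (minTensor A B) fle
    (fun f => exists i, f = Omega A B (U i))
    (Omega A B (fun s => exists i, U i s)).
Proof.
  intros [i0 _] hU.
  assert (union_ne : exists s, exists i, U i s)
    by (destruct (hU i0) as [s hs]; now exists s, i0).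
  split; [| split].
  - now exists (fun s => exists i, U i s).
  - intros f [i ->]; apply Omega_antitone; [exact (hU i) |].
    intros s hs; now exists i.
  - intros z _ hz l; apply Omega_glb; [exact union_ne |].
    intros s [i hs].
    exact (B3le_trans _ _ _ (hz _ (ex_intro _ i eq_refl) l) (Omega_lb (U i) l s hs)).
Qed.

Lemma minTensor_has_infs (P : (ef A * ef B -> B3) -> Prop) :
  (forall f, P f -> minTensor A B f) -> (exists f, P f) ->
  exists g, is_inf_in (minTensor A B) fle P g.
Proof.
  intros hP [f0 hf0].
  set (I := { V : st A * st B -> Prop | (exists s, V s) /\ P (Omega A B V) }).
  assert (hI : exists i : I, True).
  { destruct (hP f0 hf0) as [V [hV ->]]. now exists (exist _ V (conj hV hf0)). }
  assert (hne : forall i : I, exists s, proj1_sig i s).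
  { intros [V [hV hPV]]; exact hV. }
  destruct (Omega_union_is_inf I (@proj1_sig _ _) hI hne) as [hmin [hlb hglb]].
  eexists; split; [exact hmin | split].
  - intros f hf; destruct (hP f hf) as [V [hV ->]].
    apply hlb; now exists (exist _ V (conj hV hf)).
  - intros z hz hzP; apply hglb; [exact hz |].
    intros f [[V [hV hPV]] ->]; exact (hzP _ hPV).
Qed.

End Omega.

Theorem mainTheorem4 (A B : SEChu) :
  (* the pointwise order restricted to S~_AB is a partial order *)
  ((forall f, minTensor A B f -> fle f f) /\
   (forall f g, minTensor A B f -> minTensor A B g -> fle f g -> fle g f -> f = g) /\
   (forall f g h, minTensor A B f -> minTensor A B g -> minTensor A B h ->
      fle f g -> fle g h -> fle f h)) /\
  (* every nonempty subset of S~_AB has an infimum in S~_AB *)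
  (forall P : (ef A * ef B -> B3) -> Prop,
     (forall f, P f -> minTensor A B f) -> (exists f, P f) ->
     exists g, is_inf_in (minTensor A B) fle P g) /\
  (* inf_i Omega(U_i) = Omega(union U_i) *)
  (forall (I : Type) (U : I -> st A * st B -> Prop),
     (exists i : I, True) -> (forall i, exists s, U i s) ->
     is_inf_in (minTensor A B) fle
       (fun f => exists i, f = Omega A B (U i))
       (Omega A B (fun s => exists i, U i s))).
Proof.
  split; [| split].
  - split; [| split].
    + intros f _; apply fle_refl.
    + intros f g _ _; apply fle_antisym.
    + intros f g h _ _ _; apply fle_trans.
  - apply minTensor_has_infs.
  - apply Omega_union_is_inf.
Qed.
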